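(* Let $(D,k,r)$ be an instance of the Rooted Maximum Leaf Outbranching problem such that $D$ is reduced (none of the reduction rules (0)–(3) below applies to $D$). If $D$ has a vertex of indegree at least $k$, then $D$ has an outbranching rooted at $r$ with at least $k$ leaves. Rules: (0) some vertex of $D$ is not reachable from $r$ by a directed path (then the instance is replaced by a trivially FALSE one); (1) $x$ is a cutvertex of $D$: delete $x$ and add an arc $(v,z)$ for every $v\in N^-(x)$ and $z\in N^+(x)\setminus\{v\}$; (2) $P$ is a bipath of length 4: contract two consecutive internal vertices of $P$; (3) $x$ is a vertex and some $y\in N^-(x)$ is such that $N^-(x)\setminus\{y\}$ cuts $y$ from $r$ (every directed path from $r$ to $y$ meets $N^-(x)\setminus\{y\}$): delete the arc $(y,x)$.
   Context: A rooted digraph is a loopless digraph $D$ with a distinguished vertex $r$ (the root) such that: there is no arc $(u,r)$ for any $u\in V(D)$; there is no arc $(x,y)$ with $x\neq r$ and $y$ an outneighbour of $r$; and $r$ has outdegree at least 2. $N^-(x)$, $N^+(x)$ are the in- and out-neighbourhoods of $x$. A cut of $D$ is a set $S\subseteq V(D)\setminus\{r\}$ such that some vertex $z\notin S$ is not the endpoint of any directed path starting at $r$ in $D-S$; a cutvertex is a cut of size 1. A sequence of distinct vertices $(x_1,\dots,x_l)$, $l\ge 3$, is a bipath of length $l-1$ if the set of arcs incident to $\{x_2,\dots,x_{l-1}\}$ is exactly $\{(x_i,x_{i+1}),(x_{i+1},x_i):1\le i\le l-1\}$. An outbranching of $D$ is a spanning subdigraph which is a directed tree rooted at $r$ with all arcs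 directed away from $r$; its leaves are its vertices of outdegree 0. The Rooted Maximum Leaf Outbranching problem asks whether $D$ has an outbranching rooted at $r$ with at least $k$ leaves. *)

From mathcomp Require Import all_boot.
Set Implicit Arguments. Unset Strict Implicit. Unset Printing Implicit Defensive.

Section Digraph.
Variables (T : finType) (a : rel T) (r : T).

Definition loopless : Prop := forall x, ~~ a x x.

Definition rooted : Prop :=
  [/\ loopless,
      forall u, ~~ a u r,
      forall x y, x != r -> a r y -> ~~ a x y
    & 2 <= #|[set y | a r y]|].

(* arcs of D - S (arcs entering S removed; r is the start of all paths) *)
Definition avoid_rel (S : {set T}) : rel T := [rel u v | a u v && (v \notin S)].

Definition reach_avoid (S : {set T}) (z : T) : bool := connect (avoid_rel S) r z.

Definition is_cut (S : {set T}) : Prop :=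
  r \notin S /\ exists z, z \notin S /\ ~~ reach_avoid S z.

Definition is_cutvertex (x : T) : Prop := is_cut [set x].

(* every directed path from r to y meets S *)
Definition cuts_from_root (S : {set T}) (y : T) : Prop :=
  (r \in S) \/ ~~ reach_avoid S y.

Definition inner (s : seq T) : seq T := take (size s - 2) (behead s).

Definition bipath (s : seq T) : Prop :=
  [/\ uniq s, 3 <= size s &
      forall u v, (a u v && ((u \in inner s) || (v \in inner s))) =
                  (((u, v) \in zip s (behead s)) || ((v, u) \in zip s (behead s)))].

Definition bipath_len (s : seq T) : nat := (size s).-1.

Definition inneighbours (x : T) : {set T} := [set u | a u x].

Definition rule0_applies : Prop := exists z, ~~ connect a r z.
Definition rule1_applies : Prop := exists x, is_cutvertex x.
Definition rule2_applies : Prop := exists s, bipath s /\ bipath_len s = 4.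
Definition rule3_applies : Prop :=
  exists x y, a y x /\ cuts_from_root (inneighbours x :\ y) y.

Definition reduced : Prop :=
  ~ rule0_applies /\ ~ rule1_applies /\ ~ rule2_applies /\ ~ rule3_applies.

Definition outbranching (b : rel T) : Prop :=
  [/\ subrel b a,
      #|[set u | b u r]| = 0,
      forall v, v != r -> #|[set u | b u v]| = 1
    & forall v, connect b r v].

Definition leaves (b : rel T) : {set T} := [set v | [forall w, ~~ b v w]].

Definition indegree (v : T) : nat := #|inneighbours v|.

End Digraph.

From mathcomp Require Import all_boot.

Set Implicit Arguments. Unset Strict Implicit. Unset Printing Implicit Defensive.

(* Let Y be the in-neighbourhood of a vertex x of large indegree. As rule (3)
   does not apply, every y in Y is reachable from r by a path whose arcs all
   leave vertices outside Y. Grow a shortest-path outbranching that uses such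
   arcs on the set of vertices reachable in this way, and arbitrary arcs
   elsewhere. Then no vertex of Y is a proper ancestor of another, so the
   leaves below the vertices of Y are pairwise distinct. *)

Lemma connect_ind (T : finType) (e : rel T) (P : T -> Prop) (x : T) :
  P x -> (forall u v, connect e x u -> P u -> e u v -> P v) ->
  forall y, connect e x y -> P y.
Proof.
move=> Px step y /connectP [s]; elim/last_ind: s y => [|s w IHs] y /=.
  by move=> _ ->.
rewrite rcons_path last_rcons => /andP [xs ew] ->.
apply: step (IHs _ xs erefl) ew.
by apply/connectP; exists s.
Qed.

Section ParentFunction.
Variables (T : finType) (e : rel T) (r : T).

Lemma exists_rank : exists d : T -> nat, forall v, connect e r v -> v != r ->
  exists2 u, e u v & d u < d v.
Proof.
have dist_ex v : exists n, (~~ connect e r v) ||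
    [exists s : n.-tuple T, path e r s && (last r s == v)].
  have [/connectP [s rs vs] | _] := boolP (connect e r v); last by exists 0.
  exists (size s); apply/orP; right; apply/existsP; exists (in_tuple s).
  by rewrite /= rs -vs eqxx.
exists (fun v => ex_minn (dist_ex v)) => v rv vr.
case: ex_minnP => n /orP [|]; first by rewrite rv.
move=> /existsP [[s /eqP sz] /= /andP [rs /eqP vs]] min_n.
case/lastP: s sz rs vs => [|s w]; first by move=> _ _ /= vr'; rewrite vr' eqxx in vr.
rewrite size_rcons rcons_path last_rcons => sz /andP [rs ew] wv; subst w.
exists (last r s) => //.
case: ex_minnP => m _ min_m; rewrite -sz ltnS min_m //.
by apply/orP; right; apply/existsP; exists (in_tuple s); rewrite /= rs eqxx.
Qed.

Lemma exists_parent : exists (p : T -> T) (d : T -> nat), p r = r /\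
  forall v, connect e r v -> v != r -> e (p v) v /\ d (p v) < d v.
Proof.
have [d rankP] := exists_rank.
exists (fun v => if v == r then r else odflt r [pick u | e u v & d u < d v]), d.
split=> [|v rv vr]; first by rewrite eqxx.
rewrite (negbTE vr); case: pickP => [u /andP [] // | none].
have [u euv duv] := rankP v rv vr.
by move: (none u); rewrite euv duv.
Qed.

End ParentFunction.

Section ParentTree.
Variables (T : finType) (a : rel T) (r : T) (p : T -> T) (d : T -> nat).
Hypothesis parentP : forall v, v != r -> a (p v) v /\ d (p v) < d v.

Definition parent_tree : rel T := [rel u v | (v != r) && (p v == u)].

Lemma parent_tree_rank u v : parent_tree u v -> d u < d v.
Proof. by move=> /andP [vr /eqP <-]; case: (parentP vr). Qed.

Lemma parent_tree_outbranching : outbranching a r parent_tree.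
Proof.
split.
- by move=> u v /andP [vr /eqP <-]; case: (parentP vr).
- by apply: eq_card0 => u; rewrite !inE /parent_tree /= eqxx.
- move=> v vr; rewrite (_ : [set u | _] = [set p v]) ?cards1 //; apply/setP => u.
  by rewrite !inE /parent_tree /= vr eq_sym.
- move=> v; elim: {v}(d v) {-2}v (leqnn (d v)) => [|n IHn] v dv;
    have [-> // | vr] := eqVneq v r; have [_ dpv] := parentP vr.
    by move: dv; rewrite leqn0 => /eqP dv; rewrite dv in dpv.
  apply: connect_trans (IHn (p v) _) (connect1 _); last by rewrite /parent_tree /= vr eqxx.
  by rewrite -ltnS (leq_trans dpv).
Qed.

Lemma connect_parent_tree u v : connect parent_tree u v -> exists n, iter n p v = u.
Proof.
move=> /connectP [s]; elim: s u => [|w s IHs] u /=; first by move=> _ ->; exists 0.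
move=> /andP [/andP [_ /eqP <-] ws] vl; have [n <-] := IHs w ws vl.
by exists n.+1.
Qed.

Lemma leaves_antichain (Y : {set T}) :
  {in Y &, forall y y' n, iter n p y = y' -> y = y'} ->
  #|Y| <= #|leaves parent_tree|.
Proof.
move=> antichain.
set leaf := fun y => [arg max_(l > y | connect parent_tree y l) d l].
have leafP y : connect parent_tree y (leaf y) /\ leaf y \in leaves parent_tree.
  rewrite /leaf; case: arg_maxnP => // l yl lmax; split => //.
  rewrite inE; apply/forallP => w; apply/negP => lw.
  by have := lmax w (connect_trans yl (connect1 lw)); rewrite /= leqNgt (parent_tree_rank lw).
rewrite -(card_in_imset (f := leaf)).
  by apply/subset_leq_card/subsetP => _ /imsetP [y _ ->]; case: (leafP y).
move=> y y' yY y'Y same_leaf.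
have [i iy] := connect_parent_tree (proj1 (leafP y)).
have [j jy'] := connect_parent_tree (proj1 (leafP y')).
rewrite same_leaf in iy.
have [ij | ji] := leqP i j.
  by apply: (antichain y y' yY y'Y (j - i)); rewrite -iy -iterD subnK.
by symmetry; apply: (antichain y' y y'Y yY (i - j)); rewrite -jy' -iterD subnK // ltnW.
Qed.

End ParentTree.

Section NonCuttingSet.
Variables (T : finType) (a : rel T) (r : T) (Y : {set T}).
Hypothesis Y_not_cut : forall y, y \in Y -> ~ cuts_from_root a r (Y :\ y) y.

Definition arc_from_outside : rel T := [rel u v | a u v && (u \notin Y)].

Definition reach_from_outside : {set T} := [set v | connect arc_from_outside r v].

Definition layered_rel : rel T :=
  [rel u v | a u v && ((v \in reach_from_outside) ==>
                       (u \in reach_from_outside) && (u \notin Y))].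

Lemma only_root_in_set y : r \in Y -> y \in Y -> y = r.
Proof.
move=> rY yY; apply/eqP/negPn/negP => yr; apply: (Y_not_cut yY); left.
by rewrite in_setD1 rY andbT eq_sym.
Qed.

(* Stop the path at its first visit of [y]: before that, all vertices lie
   outside [Y]. *)
Lemma sub_reach_from_outside : {subset Y <= reach_from_outside}.
Proof.
move=> y yY; rewrite inE.
have r_out : r \notin Y :\ y by apply/negP => ry; apply: (Y_not_cut yY); left.
have first_visit u s : u \notin Y :\ y -> connect arc_from_outside r u ->
    path (avoid_rel a (Y :\ y)) u s -> y = last u s -> connect arc_from_outside r y.
  elim: s u => [|w s IHs] u u_out ru /=; first by move=> _ ->.
  move=> /andP [/andP [auw w_out] ws]; have [<- // | uy] := eqVneq u y.
  apply: IHs ws => //; apply: connect_trans ru (connect1 _).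
  by move: u_out; rewrite /arc_from_outside /= auw in_setD1 uy.
have /connectP [s rs ys] : reach_avoid a r (Y :\ y) y.
  by apply/negPn/negP => ny; apply: (Y_not_cut yY); right.
exact: first_visit r_out (connect0 _ _) rs ys.
Qed.

Lemma connect_layered_rel :
  (forall v, connect a r v) -> forall v, connect layered_rel r v.
Proof.
move=> reach v; apply: (connect_ind (P := connect layered_rel r)) (reach v) => //.
move=> u w _ ru auw; have [wR | wR] := boolP (w \in reach_from_outside); last first.
  by apply: connect_trans ru (connect1 _); rewrite /layered_rel /= auw (negbTE wR).
move: wR; rewrite inE; apply: (connect_ind (P := connect layered_rel r)) => //.
move=> z t rz rz' zt; have /andP [azt zY] := zt.
have zR : z \in reach_from_outside by rewrite inE.
have tR : t \in reach_from_outside by rewrite inE (connect_trans rz (connect1 zt)).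
by apply: connect_trans rz' (connect1 _); rewrite /layered_rel /= azt zR tR.
Qed.

Lemma layered_parent_antichain (p : T -> T) :
  p r = r -> (forall v, v != r -> layered_rel (p v) v) ->
  {in Y &, forall y y' n, iter n p y = y' -> y = y'}.
Proof.
move=> pr parentP y y' yY y'Y.
have [rY | rY] := boolP (r \in Y).
  by rewrite (only_root_in_set rY yY) (only_root_in_set rY y'Y).
have parent_out v : v \in reach_from_outside -> p v \in reach_from_outside :\: Y.
  move=> vR; have [-> | vr] := eqVneq v r; first by rewrite pr !inE rY connect0.
  have /andP [_] := parentP v vr; rewrite vR /= => /andP [pR pY].
  by rewrite in_setD pR pY.
have ancestor_out m : iter m.+1 p y \in reach_from_outside :\: Y.
  elim: m => [|m IHm]; first exact/parent_out/sub_reach_from_outside.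
  by rewrite iterS; apply: parent_out; move: IHm; rewrite inE => /andP [].
by case=> [// | m] ym; have := ancestor_out m; rewrite ym inE y'Y.
Qed.

End NonCuttingSet.

Theorem lemma5 (T : finType) (a : rel T) (r : T) (k : nat) :
  rooted a r -> reduced a r ->
  (exists v, k <= indegree a v) ->
  exists b : rel T, outbranching a r b /\ k <= #|leaves b|.
Proof.
move=> _ [no_rule0 [_ [_ no_rule3]]] [x kx].
have reach v : connect a r v by apply/negPn/negP => nrv; apply: no_rule0; exists v.
set Y := inneighbours a x.
have Y_not_cut y : y \in Y -> ~ cuts_from_root a r (Y :\ y) y.
  by move=> yY cut; apply: no_rule3; exists x, y; rewrite inE in yY.
have [p [d [pr parentP]]] := exists_parent (layered_rel a r Y) r.
have layered_parent v : v != r -> layered_rel a r Y (p v) v /\ d (p v) < d v.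
  exact/parentP/connect_layered_rel.
have tree_parent v : v != r -> a (p v) v /\ d (p v) < d v.
  by move=> vr; have [/andP [] ? _ ?] := layered_parent v vr.
exists (parent_tree r p); split; first exact: parent_tree_outbranching tree_parent.
apply: leq_trans kx (leaves_antichain tree_parent _).
by apply: (layered_parent_antichain Y_not_cut pr) => v vr; case: (layered_parent v vr).
Qed.
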